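(* The tree $\widehat T_n$ output by PruneTree equals the smallest tree contained in $E_n$ that contains every $w\in E_n$ with $\mathsf{CanRmv}(w)=0$.
   Context: $A$ is a finite alphabet; strings $w=w_{-j}\cdots w_{-1}$ over $A$; $e$ is the empty string; $w\preceq w'$ means $w$ is a suffix of $w'$; $\mathrm{par}(w_{-j}\cdots w_{-1})=w_{-j+1}\cdots w_{-1}$. A tree is a set of strings containing $e$ and closed under $\mathrm{par}$; a leaf is an element that is the parent of no element. Data: for $\ell=1,\dots,L$ a sample $X_1^n(\ell)\in A^n$; $N_{j,\ell}(w)$ is the number of occurrences of $w$ as a block of consecutive symbols in $X_1^j(\ell)$; $\hat p_{n,\ell}(a|w)=N_{n,\ell}(wa)/N_{n-1,\ell}(w)$ when $\min_\ell N_{n-1,\ell}(w)>0$. Metrics $d_\ell$ on distributions over $A$, $d(q,q')=(d_\ell(q_\ell,q'_\ell))_\ell$, $\hat p_n(\cdot|w)=(\hat p_{n,\ell}(\cdot|w))_\ell$; confidence radii $\mathrm{conf}(w)\in[0,1]^L$; $\|v\|_{L,q}=(\frac1L\sum_\ell|v_\ell|^q)^{1/q}$; fixed $k,r\ge1$ and $c>1$. $E_n=\{w:\min_\ell N_{n-1,\ell}(w)>0\}$. For nonempty $w\in E_n$, $\mathsf{CanRmv}(w)=1$ iff for all $w',w''\in E_n$ with $w\preceq w'$ and $\mathrm{par}(w)\preceq w''$: $\|d(\hat p_n(\cdot|w'),\hat p_n(\cdot|w''))\|_{L,k}\le c\|\mathrm{conf}(w')\|_{L,r}+c\|\mathrm{conf}(w'')\|_{L,r}$;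 otherwise $0$. PruneTree: start with $\widehat T_n=E_n$ and all nodes unexamined; while $\widehat T_n$ has an unexamined leaf $w$ ($w\neq e$), remove $w$ from $\widehat T_n$ if $\mathsf{CanRmv}(w)=1$, and mark $w$ examined; output $\widehat T_n$. *)

From HB Require Import structures.
From mathcomp Require Import all_boot all_order all_algebra.
From mathcomp Require Import all_classical all_reals all_analysis.
Set Implicit Arguments. Unset Strict Implicit. Unset Printing Implicit Defensive.
Import Order.TTheory GRing.Theory Num.Theory.
Local Open Scope ring_scope.

(* Strings w = w_{-j} ... w_{-1} are represented by the sequence
   [:: w_{-j}; ...; w_{-1}] (oldest symbol first).  The empty string e is [::]. *)

Section Defs.
Variable A : finType.

Definition par (w : seq A) : seq A := behead w.

Definition suffix_of (w w' : seq A) : bool := suffix w w'.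

(* Number of occurrences of w as a block of consecutive symbols in x
   (positions i = 0 .. |x| - |w|; the empty string occurs |x|+1 times). *)
Definition occ (x w : seq A) : nat :=
  if (size w <= size x)%N then
    count (fun i => take (size w) (drop i x) == w) (iota 0 (size x - size w).+1)
  else 0.

Definition strset := seq A -> Prop.

Definition subset_s (S T : strset) : Prop := forall w, S w -> T w.

Definition is_tree (T : strset) : Prop :=
  T [::] /\ forall w, T w -> T (par w).

Definition is_leaf (T : strset) (w : seq A) : Prop :=
  T w /\ forall u, T u -> u <> [::] -> par u <> w.

Definition smallest_tree_containing (E S T : strset) : Prop :=
  [/\ is_tree T, subset_s T E, subset_s S T &
      forall T', is_tree T' -> subset_s T' E -> subset_s S T' -> subset_s T T'].

(* PruneTree as a (nondeterministic) transition system on states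
   (current tree, set of examined nodes), given the predicate CanRmv. *)
Definition pstate := (strset * strset)%type.

Definition prune_step (canrmv : seq A -> Prop) (s s' : pstate) : Prop :=
  exists w, [/\ is_leaf s.1 w, w <> [::], ~ s.2 w,
     (forall u, s'.1 u <-> (s.1 u /\ ~ (u = w /\ canrmv w))) &
     (forall u, s'.2 u <-> (s.2 u \/ u = w))].

Inductive prune_run (canrmv : seq A -> Prop) : pstate -> pstate -> Prop :=
| prune_refl s : prune_run canrmv s s
| prune_next s s' s'' : prune_step canrmv s s' -> prune_run canrmv s' s'' ->
    prune_run canrmv s s''.

Definition prune_terminal (s : pstate) : Prop :=
  ~ exists w, [/\ is_leaf s.1 w, w <> [::] & ~ s.2 w].

End Defs.

Section Stats.
Variables (R : realType) (A : finType) (L n : nat).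
Variable X : 'I_L -> seq A.

Definition Ncount (j : nat) (l : 'I_L) (w : seq A) : nat := occ (take j (X l)) w.

Definition En : strset A := fun w => forall l : 'I_L, (0 < Ncount n.-1 l w)%N.

Definition phat (l : 'I_L) (w : seq A) : A -> R :=
  fun a => (Ncount n l (rcons w a))%:R / (Ncount n.-1 l w)%:R.

Definition normLq (q : R) (v : 'I_L -> R) : R :=
  powR ((L%:R)^-1 * \sum_(l < L) powR `|v l| q) q^-1.

Variables (d : 'I_L -> (A -> R) -> (A -> R) -> R) (conf : seq A -> 'I_L -> R)
  (k r c : R).

Definition canrmv (w : seq A) : Prop :=
  forall w' w'', En w' -> En w'' -> suffix_of w w' -> suffix_of (par w) w'' ->
    normLq k (fun l => d l (phat l w') (phat l w''))
      <= c * normLq r (conf w') + c * normLq r (conf w'').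

Definition not_removable : strset A :=
  fun w => [/\ En w, w <> [::] & ~ canrmv w].

End Stats.

Definition is_distr (R : realType) (A : finType) (q : A -> R) : Prop :=
  (forall a, 0 <= q a) /\ \sum_(a : A) q a = 1.

Definition metric_on_distr (R : realType) (A : finType)
  (m : (A -> R) -> (A -> R) -> R) : Prop :=
  forall q1 q2 q3, is_distr q1 -> is_distr q2 -> is_distr q3 ->
    [/\ 0 <= m q1 q2, (m q1 q2 = 0 <-> q1 = q2), m q1 q2 = m q2 q1 &
        m q1 q3 <= m q1 q2 + m q2 q3].

(* Every step of PruneTree preserves four facts: the current tree is a tree,
   it lies inside E_n, it contains every node with CanRmv = 0, and no node
   that was examined and kept has CanRmv = 1.  Depths in E_n are bounded by n,
   so in a terminal state every nonempty node lies below a leaf, which must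
   have been examined and kept; hence every node is the suffix of a node with
   CanRmv = 0, and any tree containing those nodes contains the output. *)
From HB Require Import structures.
From mathcomp Require Import all_boot all_order all_algebra.
From mathcomp Require Import all_classical all_reals all_analysis.
From Stdlib Require Import Classical.
From mathcomp Require Import zify.
Import Order.TTheory GRing.Theory Num.Theory.
Local Open Scope ring_scope.

Section Trees.
Set Implicit Arguments. Unset Strict Implicit.
Variable A : finType.
Implicit Types (T : strset A) (u v w : seq A).

Lemma tree_suffix_closed T u w : is_tree T -> T u -> suffix w u -> T w.
Proof.
move=> [_ Tpar] Tu /suffixP [s eu]; move: Tu; rewrite {u}eu.
by elim: s => [//|a s IH] Tas; exact/IH/(Tpar _ Tas).
Qed.

Lemma not_leaf_child T u : T u -> ~ is_leaf T u -> exists a, T (a :: u).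
Proof.
move=> Tu nleaf; apply: NNPP => nchild; apply: nleaf; split=> // -[|a v] Tv //.
by move=> _ /= vu; apply: nchild; exists a; rewrite -vu.
Qed.

Lemma bounded_tree_leaf_above T (N : nat) :
  (forall w, T w -> (size w <= N)%N) ->
  forall u, T u -> exists2 v, is_leaf T v & suffix u v.
Proof.
move=> bnd u; move: {2}(N - size u)%N (leqnn (N - size u)) => m.
elim: m u => [|m IH] u hm Tu; have [leaf|nleaf] := classic (is_leaf T u);
  try by exists u; last exact: suffix_refl.
all: have [a Tau] := not_leaf_child Tu nleaf; have := bnd _ Tau => /= hsz.
- lia.
- have [v leaf_v auv] := IH (a :: u) ltac:(simpl; lia) Tau.
  by exists v; last exact: suffix_trans (suffix_cons u a) auv.
Qed.

Lemma occ_gt0 (x w : seq A) : (0 < occ x w)%N = infix w x.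
Proof.
rewrite /occ; apply/idP/infixP => [|[s1 [s2 ->]]].
  case: ifP => // _; rewrite -has_count => /hasP [i _ /eqP tw].
  exists (take i x), (drop (size w) (drop i x)).
  by rewrite -{1}tw !cat_take_drop.
rewrite !size_cat addnCA leq_addr -has_count; apply/hasP; exists (size s1).
  by rewrite mem_iota add0n ltnS leq0n /=; lia.
by rewrite drop_size_cat // take_size_cat.
Qed.

End Trees.

Section PruneTree.
Set Implicit Arguments. Unset Strict Implicit.
Variables (A : finType) (E : strset A) (C : seq A -> Prop).

Definition unremovable : strset A := fun w => [/\ E w, w <> [::] & ~ C w].

Definition prune_invariant (s : pstate A) : Prop :=
  [/\ is_tree s.1, subset_s s.1 E, subset_s unremovable s.1 &
      forall w, s.2 w -> s.1 w -> ~ C w].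

Lemma prune_step_invariant s s' :
  prune_invariant s -> prune_step C s s' -> prune_invariant s'.
Proof.
move=> [[T0 Tpar] sub unrm kept] [w [[Tw leaf] wne nexam tree' exam']].
split.
- split; first by apply/tree'; split=> // -[e _]; apply: wne.
  move=> u /tree' [Tu ne_u]; apply/tree'; split; first exact: Tpar.
  move=> [pu _]; case: (u =P [::]) => [u0|une].
    by apply: wne; rewrite -pu u0.
  exact: leaf u Tu une pu.
- by move=> u /tree' [/sub].
- move=> u unrm_u; apply/tree'; split; first exact: unrm.
  by case: unrm_u => _ _ nCu [uw]; rewrite -uw.
- move=> u /exam' [exam_u|->] /tree' [Tu ne_u]; first exact: kept.
  by move=> Cw; apply: ne_u.
Qed.

Lemma prune_run_invariant s s' :
  prune_invariant s -> prune_run C s s' -> prune_invariant s'.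
Proof.
move=> inv run; elim: run inv => // s0 s1 s2 step _ IH inv.
exact/IH/(prune_step_invariant inv step).
Qed.

Lemma terminal_leaf_unremovable s w :
  prune_invariant s -> prune_terminal s -> is_leaf s.1 w -> w <> [::] ->
  unremovable w.
Proof.
move=> [_ sub _ kept] term leaf wne.
have exam : s.2 w by apply: NNPP => nexam; apply: term; exists w.
have [Tw _] := leaf.
by split=> //; [exact: sub | exact: kept].
Qed.

Theorem prune_run_smallest_tree (N : nat) (final : pstate A) :
  is_tree E -> (forall w, E w -> (size w <= N)%N) ->
  prune_run C (E, fun _ => False) final -> prune_terminal final ->
  smallest_tree_containing E unremovable final.1.
Proof.
move=> treeE bnd run term.
have inv0 : prune_invariant (E, fun _ => False) by split=> //= w [].
have inv := prune_run_invariant inv0 run.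
have [tree sub unrm _] := inv.
split=> // T' treeT' _ unrmT' w Tw; case: (w =P [::]) => [->|wne].
  by case: treeT'.
have [v leaf_v wv] := bounded_tree_leaf_above (fun u Tu => bnd u (sub u Tu)) Tw.
have vne : v <> [::] by move=> v0; move: wv wne; rewrite v0 suffixs0 => /eqP.
exact: tree_suffix_closed treeT' (unrmT' _ (terminal_leaf_unremovable inv term leaf_v vne)) wv.
Qed.

End PruneTree.

Section Contexts.
Set Implicit Arguments. Unset Strict Implicit.
Variables (A : finType) (L n : nat) (X : 'I_L -> seq A).

Lemma En_infix w : En n X w <-> forall l, infix w (take n.-1 (X l)).
Proof. by split=> Ew l; have := Ew l; rewrite /Ncount occ_gt0. Qed.

Lemma En_tree : is_tree (En n X).
Proof.
split; first by apply/En_infix => l; exact: infix0s.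
move=> [|a w] /En_infix Ew //; apply/En_infix => l.
exact: (@catl_infix _ [:: a]) (Ew l).
Qed.

Lemma En_size_le : (0 < L)%N -> (forall l, size (X l) = n) ->
  forall w, En n X w -> (size w <= n)%N.
Proof.
move=> L_gt0 sizeX w /En_infix /(_ (Ordinal L_gt0)) /size_infix.
by move/leq_trans; apply; rewrite size_take_min sizeX geq_minr.
Qed.

End Contexts.

Theorem propositionA1 (R : realType) (A : finType) (L n : nat)
  (X : 'I_L -> seq A)
  (d : 'I_L -> (A -> R) -> (A -> R) -> R) (conf : seq A -> 'I_L -> R)
  (k r c : R) :
  (0 < L)%N ->
  (forall l, size (X l) = n) ->
  (forall l, metric_on_distr (d l)) ->
  (forall w l, 0 <= conf w l <= 1) ->
  1 <= k -> 1 <= r -> 1 < c ->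
  forall final : pstate A,
    prune_run (canrmv n X d conf k r c) (En n X, fun _ => False) final ->
    prune_terminal final ->
    smallest_tree_containing (En n X) (not_removable n X d conf k r c) final.1.
Proof.
move=> L_gt0 sizeX _ _ _ _ _ final run term.
exact: (@prune_run_smallest_tree _ _ _ n final (En_tree n X) (En_size_le L_gt0 sizeX) run term).
Qed.
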